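(* Let $q\ge3$ be an integer, let $c_1,\dots,c_q$ be nonnegative integers, and let $s=\sum_{i=1}^q c_i$. Then \[ \sum_{j=1}^q\sum_{k=0}^{c_j-1}\Big(\big((q-2)c_j-(q-1)k+s\big)\prod_{m=1}^{q-3}(s-k+m)\Big)=\prod_{m=2}^{q}(s+q-m). \]
   Context: An empty sum equals $0$ and an empty product equals $1$. *)

From mathcomp Require Import all_boot all_order all_algebra.

From mathcomp Require Import all_boot all_order all_algebra.
From mathcomp Require Import ring.
Import GRing.Theory.
Local Open Scope ring_scope.

(* Put n := q - 3 and write  R_n(y) := (y+1)(y+2)...(y+n)  for the
   shifted rising product.  Two discrete "integration" identities hold:
     R_{n+1}(y) - R_{n+1}(y-1)           = (n+1) R_n(y),
     y R_{n+1}(y) - (y-1) R_{n+1}(y-1)   = (n+2) y R_n(y).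
   The inner summand with y = s - k is a combination of these two backward
   differences, namely (n+2)(s-k) R_n(s-k) - (s-c)(n+1) R_n(s-k), so summing over
   k < c telescopes to  c R_{n+1}(s).  Summing over j then gives  s R_{n+1}(s),
   and the right-hand side is the same product s(s+1)...(s+q-2) read backwards. *)

Section RisingProducts.

Variable R : comPzRingType.

Definition shifted_rising (n : nat) (y : R) : R := \prod_(1 <= m < n.+1) (y + m%:R).

Lemma shifted_risingSr (n : nat) (y : R) :
  shifted_rising n.+1 y = shifted_rising n y * (y + n.+1%:R).
Proof. by rewrite /shifted_rising big_nat_recr. Qed.

Lemma shifted_risingSl (n : nat) (y : R) :
  shifted_rising n.+1 (y - 1) = y * shifted_rising n y.
Proof.
rewrite /shifted_rising big_nat_recl // addrNK; congr (_ * _).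
by apply: eq_bigr => m _; ring.
Qed.

Lemma shifted_rising_diff (n : nat) (y : R) :
  shifted_rising n.+1 y - shifted_rising n.+1 (y - 1) = n.+1%:R * shifted_rising n y.
Proof. rewrite shifted_risingSl shifted_risingSr; ring. Qed.

Lemma shifted_rising_weighted_diff (n : nat) (y : R) :
  y * shifted_rising n.+1 y - (y - 1) * shifted_rising n.+1 (y - 1)
  = n.+2%:R * (y * shifted_rising n y).
Proof. rewrite shifted_risingSl shifted_risingSr; ring. Qed.

Lemma sum_backward_diff (F : R -> R) (x : R) (c : nat) :
  \sum_(0 <= k < c) (F (x - k%:R) - F (x - k%:R - 1)) = F x - F (x - c%:R).
Proof.
rewrite (telescope_sumr_eq (fun k => - F (x - k%:R))) // => [|k _].
  by rewrite subr0 opprK addrC.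
by rewrite -addn1 natrD opprK addrC opprD addrA.
Qed.

(* The inner sum over k < c of the theorem, for a general base point x: the
   summand splits as (n+2)(x-k) R_n(x-k) - (x-c)(n+1) R_n(x-k), and both parts
   telescope by the two difference identities. *)
Lemma inner_sum (n c : nat) (x : R) :
  \sum_(0 <= k < c)
     ((n.+1%:R * c%:R - n.+2%:R * k%:R + x) * shifted_rising n (x - k%:R))
  = c%:R * shifted_rising n.+1 x.
Proof.
transitivity (\sum_(0 <= k < c)
                (n.+2%:R * ((x - k%:R) * shifted_rising n (x - k%:R)))
              - (x - c%:R) * \sum_(0 <= k < c) (n.+1%:R * shifted_rising n (x - k%:R))).
  by rewrite mulr_sumr -sumrB; apply: eq_bigr => k _; ring.
under eq_bigr do rewrite -shifted_rising_weighted_diff.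
under [X in _ - _ * X]eq_bigr do rewrite -shifted_rising_diff.
rewrite (sum_backward_diff (fun y => y * shifted_rising n.+1 y)).
rewrite (sum_backward_diff (shifted_rising n.+1)); ring.
Qed.

Lemma reversed_product (n : nat) (s : R) :
  \prod_(2 <= m < n.+2) (s + n.+1%:R - m%:R) = \prod_(0 <= i < n) (s + i%:R).
Proof.
elim: n => [|n IH]; first by rewrite !big_geq.
rewrite big_nat_recl // [RHS]big_nat_recr //= -IH mulrC; congr (_ * _).
  by apply: eq_bigr => m _; ring.
ring.
Qed.

Lemma product_from_zero (n : nat) (s : R) :
  \prod_(0 <= i < n.+2) (s + i%:R) = s * shifted_rising n.+1 s.
Proof. by rewrite big_nat_recl // addr0 /shifted_rising big_add1. Qed.

End RisingProducts.

Arguments shifted_rising {R} n y.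

Theorem lemmaA2 (q : nat) (c : 'I_q -> nat) (hq : (3 <= q)%N) :
  let s : int := (\sum_(i < q) c i)%N%:Z in
  \sum_(j < q) \sum_(0 <= k < c j)
     ((((q%:Z - 2) * (c j)%:Z - (q%:Z - 1) * k%:Z + s)
       * \prod_(1 <= m < (q - 3).+1) (s - k%:Z + m%:Z)) : int)
  = \prod_(2 <= m < q.+1) (s + q%:Z - m%:Z).
Proof.
case: q c hq => [|[|[|n]]] // c _ s.
rewrite subSS subSS subSS subn0.
transitivity (\sum_(j < n.+3) (c j)%:R * shifted_rising n.+1 s).
  apply: eq_bigr => j _; rewrite -inner_sum; apply: eq_bigr => k _.
  by rewrite /shifted_rising; congr (_ * _); [ring | apply: eq_bigr => m _; ring].
rewrite -mulr_suml -natr_sum natz -/s -product_from_zero -reversed_product.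
by apply: eq_bigr => m _; rewrite !natz.
Qed.
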